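(* Let $q$ be a prime power, let $F_1\subsetneq F_0\subseteq\mathbb{F}_q^n$ be linear codes, and let $G_E\in\mathbb{F}_q^{e\times n}$ have row space $E$ with $F_0\cap E=\{\underline{0}\}$. In the QSS scheme given by $\mathrm{ECSS}(F_0,F_1,G_E)$, when the combiner has prior access to all $e$ extension qudits, the secret can be recovered from every choice of $\tau$ qudits out of the $n$ original qudits (i.e. $J\cup\{n+1,\dots,n+e\}$ is authorized for every $J\subseteq[n]$ with $|J|=\tau$) if and only if $\tau\geq\tau_e$, where $$\tau_e=n-\min\{\mathrm{wt}(F_0\setminus F_1),\ \mathrm{wt}((F_1+E)^\perp\setminus(F_0+E)^\perp)\}+1.$$
   Context: For linear codes $L_1\subsetneq L_0\subseteq\mathbb{F}_q^n$, $\mathrm{wt}(L_0\setminus L_1)=\min\{\mathrm{wt}(\underline{c}):\underline{c}\in L_0,\ \underline{c}\notin L_1\}$ (Hamming weight); $L^\perp$ is the dual code. Let $F_0,F_1$ have dimensions $f_0,f_1$, and let $G_{F_0}=\begin{bmatrix}G_{F_0/F_1}\\ G_{F_1}\end{bmatrix}$ be a generator matrix of $F_0$ with $G_{F_1}$ generating $F_1$ and $G_{F_0/F_1}$ generating a complement of $F_1$ in $F_0$. The extended CSS code $\mathrm{ECSS}(F_0,F_1,G_E)$ is the CSS code of $C_0$ over $C_1$ where $C_0,C_1\subseteq\mathbb{F}_q^{n+e}$ are generated by $\begin{bmatrix}G_{F_0}&0\\ G_E&I_e\end{bmatrix}$ and $\begin{bmatrix}G_{F_1}&0\\ G_E&I_e\end{bmatrix}$;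 its encoding maps (up to normalization, extended linearly) $|\underline{s}\rangle$, $\underline{s}\in\mathbb{F}_q^{f_0-f_1}$, to $\sum_{\underline{r}_1\in\mathbb{F}_q^{f_1},\underline{r}_2\in\mathbb{F}_q^{e}}|[\,G_{F_0/F_1}^T\ G_{F_1}^T\ G_E^T\,](\underline{s};\underline{r}_1;\underline{r}_2)\rangle|\underline{r}_2\rangle$. The first $n$ qudits are the original qudits and the last $e$ the extension qudits; qudit $j$ is given to party $j\in[n+e]$. A set of parties is authorized if the secret can be recovered from their qudits. *)

From HB Require Import structures.
From mathcomp Require Import all_boot all_order all_algebra all_field.
Set Implicit Arguments. Unset Strict Implicit. Unset Printing Implicit Defensive.
Import Order.TTheory GRing.Theory Num.Theory.
Local Open Scope ring_scope.

Definition hwt (F : finFieldType) (n : nat) (v : 'rV[F]_n) : nat :=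
  #|[set i : 'I_n | v 0 i != 0]|.

(* Minimum weight of the vectors satisfying P (default n if none; all sets
   used below are nonempty under the theorem's hypotheses). *)
Definition minwt (F : finFieldType) (n : nat) (P : pred 'rV[F]_n) : nat :=
  \big[minn/n]_(v : 'rV[F]_n | P v) hwt v.

(* wt(L0 \ L1) for codes given as row spaces of L0 and L1. *)
Definition wt_diff (F : finFieldType) (n m0 m1 : nat)
  (L0 : 'M[F]_(m0, n)) (L1 : 'M[F]_(m1, n)) : nat :=
  minwt (fun v : 'rV[F]_n => (v <= L0)%MS && ~~ (v <= L1)%MS).

Definition in_dual (F : finFieldType) (n m : nat) (L : 'M[F]_(m, n))
  (v : 'rV[F]_n) : bool := L *m v^T == 0.

Definition wt_dual_diff (F : finFieldType) (n m0 m1 : nat)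
  (L0 : 'M[F]_(m0, n)) (L1 : 'M[F]_(m1, n)) : nat :=
  minwt (fun v : 'rV[F]_n => in_dual L1 v && ~~ in_dual L0 v).

(* tau_e = n - min{ wt(F0\F1), wt((F1+E)^perp \ (F0+E)^perp) } + 1, where
   F0 = rowspace [G01; G1], F1 = rowspace G1, E = rowspace GE. *)
Definition tau_e (F : finFieldType) (n k f1 e : nat)
  (G01 : 'M[F]_(k, n)) (G1 : 'M[F]_(f1, n)) (GE : 'M[F]_(e, n)) : nat :=
  (n - minn (wt_diff (col_mx G01 G1) G1)
            (wt_dual_diff (col_mx (col_mx G01 G1) GE) (col_mx G1 GE)) + 1)%N.

(* Computational basis states of N qudits of dimension q = #|F|:
   configurations {ffun 'I_N -> F}.  Operators on a space with basis T are
   T -> T -> algC (matrix entries). *)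

(* Configurations supported on A (basis of the subsystem of the qudits in A). *)
Definition supp_on (F : finFieldType) (N : nat) (A : {set 'I_N})
  (x : {ffun 'I_N -> F}) : bool := [forall i, (i \notin A) ==> (x i == 0)].

Definition confA (F : finFieldType) (N : nat) (A : {set 'I_N}) :=
  {x : {ffun 'I_N -> F} | supp_on A x}.

Definition is_density (S : finType) (rho : S -> S -> algC) : Prop :=
  [/\ forall s s', rho s' s = (rho s s')^*,
      forall v : S -> algC, 0 <= \sum_(s : S) \sum_(s' : S) (v s)^* * rho s s' * v s'
    & \sum_(s : S) rho s s = 1].

(* Encoded state  V rho V^dagger  for the encoding map V given by its matrix
   enc s y = <y| V |s>. *)
Definition encode_state (F : finFieldType) (N : nat) (S : finType)
  (enc : S -> {ffun 'I_N -> F} -> algC) (rho : S -> S -> algC)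
  (y y' : {ffun 'I_N -> F}) : algC :=
  \sum_(s : S) \sum_(s' : S) enc s y * rho s s' * (enc s' y')^*.

(* Partial trace over the qudits outside A. *)
Definition reduce (F : finFieldType) (N : nat) (A : {set 'I_N})
  (M : {ffun 'I_N -> F} -> {ffun 'I_N -> F} -> algC)
  (a a' : confA F A) : algC :=
  \sum_(b : confA F (~: A)) M (val a + val b) (val a' + val b).

(* A is authorized: there is a quantum channel (CPTP map, given by Kraus
   operators K i : (subsystem A) -> (secret space)) recovering every secret
   density operator from the reduced state on A. *)
Definition authorized (F : finFieldType) (N : nat) (S : finType)
  (enc : S -> {ffun 'I_N -> F} -> algC) (A : {set 'I_N}) : Prop :=
  exists (m : nat) (K : 'I_m -> S -> confA F A -> algC),
    (forall a a' : confA F A,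
        \sum_(i < m) \sum_(s : S) (K i s a)^* * K i s a' = (a == a')%:R) /\
    (forall rho : S -> S -> algC, is_density rho ->
       forall s s' : S,
         \sum_(i < m) \sum_(a : confA F A) \sum_(a' : confA F A)
            K i s a * @reduce F N A (encode_state enc rho) a a' * (K i s' a')^*
         = rho s s').

Definition ecss_conf (F : finFieldType) (n k f1 e : nat)
  (G01 : 'M[F]_(k, n)) (G1 : 'M[F]_(f1, n)) (GE : 'M[F]_(e, n))
  (s : 'rV[F]_k) (r1 : 'rV[F]_f1) (r2 : 'rV[F]_e) : {ffun 'I_(n + e) -> F} :=
  [ffun i => match split i with
             | inl j => (s *m G01 + r1 *m G1 + r2 *m GE) 0 j
             | inr j => r2 0 j
             end].

(* Matrix of the (normalized) encoding  |s> |-> q^{-(f1+e)/2} sum_{r1,r2} |..>|r2>. *)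
Definition ecss_enc (F : finFieldType) (n k f1 e : nat)
  (G01 : 'M[F]_(k, n)) (G1 : 'M[F]_(f1, n)) (GE : 'M[F]_(e, n))
  (s : 'rV[F]_k) (y : {ffun 'I_(n + e) -> F}) : algC :=
  (sqrtC ((#|F| ^ (f1 + e))%N%:R))^-1 *
  \sum_(r1 : 'rV[F]_f1) \sum_(r2 : 'rV[F]_e) (y == ecss_conf G01 G1 GE s r1 r2)%:R.

Definition with_ext (n e : nat) (J : {set 'I_n}) : {set 'I_(n + e)} :=
  (lshift e @: J) :|: [set rshift n i | i : 'I_e].

(* Let A consist of J and the extension qudits, and let c(s, r1, r2) be the
   basis configuration (s G01 + r1 G1 + r2 GE, r2).  The secret is recoverable
   from A when (i) the A-part of any configuration in the support of the
   encoding of s determines s, and (ii) translating by some c(s, r1, r2)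
   supported on A turns the encoding of s into that of 0: the recovery reads
   s off the A-part and undoes the translation.  If (i) fails, a word of
   F0 \ F1 vanishes on J; translating by it changes the secret without
   touching A, so two secrets have the same reduced state.  If (ii) fails,
   duality yields a word w of (F1 + E)^perp \ (F0 + E)^perp vanishing on J;
   configurations of secrets s, t with (s - t) G01 w^T <> 0 then never agree
   outside A, so the reduced state cannot tell a superposition of s and t
   from their mixture.  Finally, every tau-subset of [n] avoids the zero set
   of every word of weight at least d iff n - d < tau, which gives tau_e. *)

From HB Require Import structures.
From mathcomp Require Import all_boot all_order all_algebra all_field.
From mathcomp Require Import ring zify.
Import GRing.Theory Num.Theory.
Local Open Scope ring_scope.
Set Implicit Arguments. Unset Strict Implicit. Unset Printing Implicit Defensive.

Section Supports.
Variables (F : finFieldType) (N : nat).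
Implicit Types (A : {set 'I_N}) (x y : {ffun 'I_N -> F}).

Lemma supp_onP A x : reflect (forall i, i \notin A -> x i = 0) (supp_on A x).
Proof.
apply: (iffP forallP) => [xA i iA | xA i]; last by apply/implyP => /xA ->.
by apply/eqP; move: (xA i); rewrite iA.
Qed.

Lemma supp_on_zmod_closed A : zmod_closed (supp_on A : {pred {ffun 'I_N -> F}}).
Proof.
split=> [|x y]; rewrite !unfold_in; first by apply/supp_onP => i _; rewrite ffunE.
move=> /supp_onP xA /supp_onP yA; apply/supp_onP => i iA.
by rewrite !ffunE xA ?yA ?subrr.
Qed.

Variable A : {set 'I_N}.

(* Configurations supported on A form an additive group, so that secrets can
   be translated inside [confA F A]. *)
HB.instance Definition _ :=
  GRing.isZmodClosed.Build _ (supp_on A : {pred {ffun 'I_N -> F}})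
    (supp_on_zmod_closed A).
HB.instance Definition _ :=
  SubType.copy (confA F A) {x : {ffun 'I_N -> F} | supp_on A x}.
HB.instance Definition _ :=
  Choice.copy (confA F A) {x : {ffun 'I_N -> F} | supp_on A x}.
HB.instance Definition _ :=
  Finite.copy (confA F A) {x : {ffun 'I_N -> F} | supp_on A x}.
HB.instance Definition _ := [SubChoice_isSubZmodule of confA F A by <:].

End Supports.

Section Splitting.
Variables (F : finFieldType) (N : nat).
Implicit Types (A : {set 'I_N}) (x y : {ffun 'I_N -> F}).

Definition restrict A y : {ffun 'I_N -> F} := [ffun i => if i \in A then y i else 0].

Lemma restrict_supp_on A y : supp_on A (restrict A y).
Proof. by apply/supp_onP => i iA; rewrite ffunE (negbTE iA). Qed.

Lemma restrict_addC A y : restrict A y + restrict (~: A) y = y.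
Proof. by apply/ffunP => i; rewrite !ffunE inE; case: (i \in A); rewrite ?addr0 ?add0r. Qed.

Lemma restrict_add A x y : supp_on A x -> supp_on (~: A) y ->
  restrict A (x + y) = x /\ restrict (~: A) (x + y) = y.
Proof.
move=> /supp_onP xA /supp_onP yA; split; apply/ffunP => i; rewrite !ffunE.
  by case: ifP => iA; [rewrite yA ?addr0 // inE iA | rewrite xA ?iA].
rewrite inE; case: ifP => iA; first by rewrite xA ?add0r.
by rewrite yA ?addr0 // inE iA.
Qed.

Lemma sum_confA_split A (f : {ffun 'I_N -> F} -> algC) :
  \sum_(a : confA F A) \sum_(b : confA F (~: A)) f (val a + val b) = \sum_y f y.
Proof.
pose join (p : confA F A * confA F (~: A)) := val p.1 + val p.2.
rewrite pair_big /= [RHS](reindex join) //.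
exists (fun y => (Sub (restrict A y) (restrict_supp_on A y),
                 Sub (restrict (~: A) y) (restrict_supp_on (~: A) y))) => [[a b] _ | y _].
  by have [ra rb] := restrict_add (valP a) (valP b); congr pair; apply: val_inj.
by rewrite /join /= restrict_addC.
Qed.

End Splitting.

Lemma sum_indicator (T : finType) (u : T) (f : T -> algC) :
  \sum_w (w == u)%:R * f w = f u.
Proof. by rewrite (bigD1 u) //= eqxx mul1r big1 ?addr0 // => w /negbTE ->; rewrite mul0r. Qed.

Section ReducedStates.
Variables (F : finFieldType) (N : nat) (S : finType).
Variables (enc : S -> {ffun 'I_N -> F} -> algC) (A : {set 'I_N}).

Definition reduce_outer (t t' : S) (a a' : confA F A) : algC :=
  \sum_(b : confA F (~: A)) enc t (val a + val b) * (enc t' (val a' + val b))^*.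

Lemma reduce_encode_state rho a a' :
  reduce (encode_state enc rho) a a' =
  \sum_t \sum_t' rho t t' * reduce_outer t t' a a'.
Proof.
rewrite /reduce /encode_state exchange_big; apply: eq_bigr => t _.
rewrite exchange_big; apply: eq_bigr => t' _; rewrite mulr_sumr.
by apply: eq_bigr => b _; rewrite mulrCA mulrA.
Qed.

Lemma authorized_reduce_inj rho1 rho2 :
  authorized enc A -> is_density rho1 -> is_density rho2 ->
  (forall a a' : confA F A, reduce (encode_state enc rho1) a a' =
                reduce (encode_state enc rho2) a a') ->
  forall s s', rho1 s s' = rho2 s s'.
Proof.
case=> m [K [_ recK]] rho1D rho2D eq_red s s'.
rewrite -(recK rho1 rho1D) -(recK rho2 rho2D).
by apply: eq_bigr => i _; apply: eq_bigr => a _; apply: eq_bigr => a' _; rewrite eq_red.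
Qed.

Definition diag_density (p : S -> algC) (t t' : S) : algC := p t * (t == t')%:R.

Lemma diag_densityP p :
  (forall t, 0 <= p t) -> \sum_t p t = 1 -> is_density (diag_density p).
Proof.
move=> p_ge0 p_sum; split.
- move=> t t'; rewrite /diag_density rmorphM /= conjC_nat eq_sym.
  by case: eqP => [-> | _]; rewrite ?mulr0 // !mulr1 conj_Creal // ger0_real.
- move=> v; apply: sumr_ge0 => t _; rewrite (bigD1 t) //= big1 => [|t' t't].
    by rewrite addr0 /diag_density eqxx mulr1 mulrAC mulr_ge0 // mulrC mul_conjC_ge0.
  by rewrite /diag_density eq_sym (negbTE t't) !mulr0 mul0r.
- by rewrite -[RHS]p_sum; apply: eq_bigr => t _; rewrite /diag_density eqxx mulr1.
Qed.

Lemma reduce_diag_density p a a' :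
  reduce (encode_state enc (diag_density p)) a a' =
  \sum_t p t * reduce_outer t t a a'.
Proof.
rewrite reduce_encode_state; apply: eq_bigr => t _.
rewrite (bigD1 t) //= big1 => [|t' t't]; first by rewrite /diag_density eqxx mulr1 addr0.
by rewrite /diag_density eq_sym (negbTE t't) mulr0 mul0r.
Qed.

Definition outer_density (c : algC) (v : S -> algC) (t t' : S) : algC :=
  c * v t * (v t')^*.

Lemma outer_densityP c v :
  0 <= c -> c * \sum_t v t * (v t)^* = 1 -> is_density (outer_density c v).
Proof.
move=> c_ge0 c_sum; split.
- move=> t t'; rewrite /outer_density !rmorphM /= conjCK (conj_Creal (ger0_real c_ge0)).
  by rewrite mulrAC.
- move=> u; have -> : \sum_t \sum_t' (u t)^* * outer_density c v t t' * u t' =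
                     c * ((\sum_t u t * (v t)^*)^* * \sum_t u t * (v t)^*).
    rewrite rmorph_sum mulr_suml mulr_sumr; apply: eq_bigr => t _.
    rewrite !mulr_sumr; apply: eq_bigr => t' _.
    rewrite /outer_density rmorphM /= conjCK; ring.
  by rewrite mulr_ge0 // mulrC mul_conjC_ge0.
- by rewrite -[RHS]c_sum mulr_sumr; apply: eq_bigr => t _; rewrite mulrA.
Qed.

Lemma reduce_outer_translate s t (c : confA F (~: A)) :
  (forall y, enc s (y + val c) = enc t y) ->
  forall a a', reduce_outer s s a a' = reduce_outer t t a a'.
Proof.
move=> enc_st a a'; rewrite /reduce_outer (reindex_inj (addIr c)) /=.
by apply: eq_bigr => b _; rewrite !addrA !enc_st.
Qed.

Lemma not_authorized_of_translate s t (c : confA F (~: A)) :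
  s != t -> (forall y, enc s (y + val c) = enc t y) -> ~ authorized enc A.
Proof.
move=> st enc_st authA; pose point u := diag_density (fun w => (w == u)%:R).
have pointP u : is_density (point u).
  apply: diag_densityP => [w | ]; first exact: ler0n.
  by rewrite -[RHS](sum_indicator u (fun _ => 1)); apply: eq_bigr => w _; rewrite mulr1.
have red_st (a a' : confA F A) : reduce (encode_state enc (point s)) a a' =
                   reduce (encode_state enc (point t)) a a'.
  by rewrite /point !reduce_diag_density !sum_indicator; exact: reduce_outer_translate.
have := authorized_reduce_inj authA (pointP s) (pointP t) red_st s s.
rewrite /point /diag_density !eqxx (negbTE st) mulr1n mulr0n mul0r mulr1.
by apply/eqP/oner_neq0.
Qed.

(* The coherent superposition of s and t and their equal mixture differ only
   in the entries (s, t) and (t, s). *)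
Lemma not_authorized_of_decoherent s t :
  s != t -> (forall a a', reduce_outer s t a a' = 0) ->
  (forall a a', reduce_outer t s a a' = 0) -> ~ authorized enc A.
Proof.
move=> st Rst Rts authA; pose v w : algC := ((w == s) || (w == t))%:R.
have v_real w : (v w)^* = v w by exact: conjC_nat.
have vv w : v w * v w = v w by rewrite /v; case: (_ || _); rewrite ?mulr1 ?mulr0.
have sum_v : \sum_w v w = 2.
  rewrite (bigD1 s) // (bigD1 t) 1?eq_sym //= big1 => [|w /andP [ws wt]].
    by rewrite /v !eqxx orbT addr0 -natrD.
  by rewrite /v (negbTE ws) (negbTE wt).
have half2 : 2^-1 * 2 = 1 :> algC by rewrite mulVf ?pnatr_eq0.
have coherentP : is_density (outer_density 2^-1 v).
  apply: outer_densityP; first by rewrite invr_ge0 ler0n.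
  rewrite -[RHS]half2 -sum_v; congr (_ * _); apply: eq_bigr => w _.
  by rewrite v_real; exact: vv.
have mixedP : is_density (diag_density (fun w => 2^-1 * v w)).
  apply: diag_densityP => [w | ]; first by rewrite mulr_ge0 ?invr_ge0 ?ler0n.
  by rewrite -mulr_sumr sum_v.
have red_eq (a a' : confA F A) :
    reduce (encode_state enc (outer_density 2^-1 v)) a a' =
    reduce (encode_state enc (diag_density (fun w => 2^-1 * v w))) a a'.
  rewrite !reduce_encode_state; apply: eq_bigr => w _; apply: eq_bigr => w' _.
  rewrite /outer_density /diag_density v_real.
  have [<- | ww'] := eqVneq w w'; first by rewrite mulr1n mulr1 -[2^-1 * v w * v w]mulrA vv.
  rewrite mulr0n mulr0 mul0r /v.
  move: ww'; case: (boolP ((w == s) || _)) => [/orP [] /eqP -> | _] ww';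
    last by rewrite !mulr0 !mul0r.
  1,2: case: (boolP ((w' == s) || _)) => [/orP [] /eqP w'E | _]; last by rewrite mulr0 mul0r.
  1-4: by [rewrite w'E ?Rst ?Rts mulr0 | move: ww'; rewrite w'E eqxx].
have := authorized_reduce_inj authA coherentP mixedP red_eq s t.
rewrite /outer_density /diag_density v_real /v !eqxx orbT (negbTE st) /=.
by rewrite mulr0n mulr0 mulr1n !mulr1; apply/eqP; rewrite invr_eq0 pnatr_eq0.
Qed.

End ReducedStates.

Section Recovery.
Variables (F : finFieldType) (N : nat) (S : finType).
Variables (enc : S -> {ffun 'I_N -> F} -> algC) (A : {set 'I_N}).
Variables (s0 : S) (dec : confA F A -> S) (shift : S -> confA F A).
Hypothesis dec_enc : forall s (a : confA F A) (b : confA F (~: A)),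
  enc s (val a + val b) != 0 -> dec a = s.
Hypothesis enc_shift : forall s y, enc s (y + val (shift s)) = enc s0 y.
Hypothesis enc_s0_normed : \sum_y enc s0 y * (enc s0 y)^* = 1.

(* Reads s off the A-part and undoes its translation: the operator indexed by
   x maps |x + shift s> to |s>. *)
Definition recovery_kraus (x : confA F A) (s : S) (a : confA F A) : algC :=
  ((dec a == s) && (a == x + shift s))%:R.

Lemma recovery_kraus_complete a a' :
  \sum_(x : confA F A) \sum_s (recovery_kraus x s a)^* * recovery_kraus x s a' = (a == a')%:R.
Proof.
rewrite exchange_big (bigD1 (dec a)) //= [X in _ + X]big1 => [|s sa]; last first.
  apply: big1 => x _; rewrite /recovery_kraus (eq_sym (dec a)) (negbTE sa) /=.
  by rewrite conjC_nat mul0r.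
rewrite addr0 (bigD1 (a - shift (dec a))) //= [X in _ + X]big1 => [|x xa]; last first.
  by rewrite /recovery_kraus eqxx /= -subr_eq eq_sym (negbTE xa) /= conjC_nat mul0r.
rewrite /recovery_kraus subrK !eqxx conjC_nat mul1r eq_sym.
by rewrite addr0; have [-> | aa'] := eqVneq a a'; rewrite ?eqxx ?andbF // (negbTE aa') andbF.
Qed.

Lemma recovery_kraus_decode s t (x : confA F A) (b : confA F (~: A)) :
  (dec (x + shift s) == s)%:R * enc t (val (x + shift s) + val b) =
  (t == s)%:R * enc s0 (val x + val b).
Proof.
have xsb : val (x + shift s) + val b = (val x + val b) + val (shift s).
  by rewrite /= addrAC.
rewrite xsb; have [-> | ts] := eqVneq t s.
  rewrite enc_shift mulr1n mul1r.
  have [-> | nz] := eqVneq (enc s0 (val x + val b)) 0; first by rewrite mulr0.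
  by rewrite (@dec_enc s _ b) ?eqxx ?mul1r // xsb enc_shift.
rewrite mulr0n mul0r; have [-> | nz] := eqVneq (enc t (val x + val b + val (shift s))) 0.
  by rewrite mulr0.
by rewrite (@dec_enc t _ b) ?(negbTE ts) ?mul0r // xsb.
Qed.

Lemma recovery_kraus_outer s s' t t' (x : confA F A) :
  (dec (x + shift s) == s)%:R * reduce_outer enc t t' (x + shift s) (x + shift s') *
    ((dec (x + shift s') == s')%:R)^* =
  ((t == s) && (t' == s'))%:R *
    \sum_(b : confA F (~: A)) enc s0 (val x + val b) * (enc s0 (val x + val b))^*.
Proof.
rewrite /reduce_outer mulr_sumr mulr_suml [RHS]mulr_sumr; apply: eq_bigr => b _.
have -> : forall (c c' p p' : algC), c * (p * p'^*) * c'^* = (c * p) * (c' * p')^*.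
  by move=> c c' p p'; rewrite [in RHS]rmorphM; ring.
rewrite !recovery_kraus_decode rmorphM /= conjC_nat -mulnb natrM; ring.
Qed.

Lemma recovery_kraus_correct rho s s' :
  \sum_(x : confA F A) \sum_a \sum_a'
    recovery_kraus x s a * reduce (encode_state enc rho) a a' * (recovery_kraus x s' a')^* =
  rho s s'.
Proof.
transitivity (\sum_(x : confA F A) rho s s' *
  \sum_(b : confA F (~: A)) enc s0 (val x + val b) * (enc s0 (val x + val b))^*); last first.
  rewrite -mulr_sumr (sum_confA_split A (fun y => enc s0 y * (enc s0 y)^*)).
  by rewrite enc_s0_normed mulr1.
apply: eq_bigr => x _.
rewrite (bigD1 (x + shift s)) //= [X in _ + X]big1 => [|a xsa]; last first.
  by apply: big1 => a' _; rewrite /recovery_kraus (negbTE xsa) andbF /= !mul0r.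
rewrite addr0 (bigD1 (x + shift s')) //= [X in _ + X]big1 => [|a' xsa']; last first.
  by rewrite /recovery_kraus (negbTE xsa') andbF /= conjC_nat mulr0.
rewrite addr0 /recovery_kraus !eqxx !andbT reduce_encode_state mulr_sumr mulr_suml.
transitivity (\sum_t \sum_t' rho t t' * (((t == s) && (t' == s'))%:R *
  \sum_(b : confA F (~: A)) enc s0 (val x + val b) * (enc s0 (val x + val b))^*)).
  apply: eq_bigr => t _; rewrite mulr_sumr mulr_suml; apply: eq_bigr => t' _.
  by rewrite -recovery_kraus_outer; ring.
rewrite (bigD1 s) //= [X in _ + X]big1 => [|t ts]; last first.
  by apply: big1 => t' _; rewrite (negbTE ts) mul0r mulr0.
rewrite addr0 (bigD1 s') //= [X in _ + X]big1 => [|t' ts']; last first.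
  by rewrite (negbTE ts') andbF mul0r mulr0.
by rewrite addr0 !eqxx mul1r.
Qed.

Lemma recovery_authorized : authorized enc A.
Proof.
exists #|{: confA F A}|, (fun i => recovery_kraus (enum_val i)); split=> [a a' | rho _ s s'].
  rewrite -(big_enum_val (fun x => \sum_s (recovery_kraus x s a)^* * recovery_kraus x s a')).
  exact: recovery_kraus_complete.
rewrite -(big_enum_val (fun x => \sum_a \sum_a' recovery_kraus x s a *
  reduce (encode_state enc rho) a a' * (recovery_kraus x s' a')^*)).
exact: recovery_kraus_correct.
Qed.

End Recovery.

Lemma authorized_of_translations (F : finFieldType) (N : nat) (S : finType)
    (enc : S -> {ffun 'I_N -> F} -> algC) (A : {set 'I_N}) (s0 : S) :
  (forall s t (a : confA F A) (b b' : confA F (~: A)),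
     enc s (val a + val b) != 0 -> enc t (val a + val b') != 0 -> s = t) ->
  (forall s, exists d : confA F A, forall y, enc s (y + val d) = enc s0 y) ->
  \sum_y enc s0 y * (enc s0 y)^* = 1 ->
  authorized enc A.
Proof.
move=> determined /fin_all_exists [shift enc_shift] normed.
pose dec (a : confA F A) :=
  odflt s0 [pick s | [exists b : confA F (~: A), enc s (val a + val b) != 0]].
apply: (@recovery_authorized _ _ _ _ _ _ dec shift _ enc_shift normed) => s a b nz.
rewrite /dec; case: pickP => [t /existsP [b' nz'] | none] /=; first exact: determined nz' nz.
by move: (none s); case: existsP => // -[]; exists b.
Qed.

Lemma exists_subset_card (T : finType) (B : {set T}) k :
  (k <= #|B|)%N -> exists2 J : {set T}, J \subset B & #|J| = k.
Proof.
rewrite -bin_gt0 -cards_draws => /card_gt0P [J]; rewrite inE => /andP [sJB /eqP cardJ].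
by exists J.
Qed.

Section Weights.
Variables (F : finFieldType) (n : nat).
Implicit Types (v w z : 'rV[F]_n) (P : pred 'rV[F]_n) (J : {set 'I_n}).

Definition zero_set v : {set 'I_n} := [set j | v 0 j == 0].

Lemma card_zero_set v : #|zero_set v| = (n - hwt v)%N.
Proof.
rewrite cardsCs card_ord /hwt; congr (_ - _)%N.
by apply: eq_card => j; rewrite !inE.
Qed.

Lemma hwt_le v : (hwt v <= n)%N.
Proof. by rewrite /hwt -[n in (_ <= n)%N]card_ord max_card. Qed.

Lemma minwt_le P v : P v -> (minwt P <= hwt v)%N.
Proof.
move=> Pv; rewrite /minwt; elim: (index_enum _) (mem_index_enum v) => [//|u s IHs].
rewrite inE big_cons => /predU1P [<- | vs]; first by rewrite Pv geq_minl.
by case: (P u); rewrite ?IHs // (leq_trans (geq_minr _ _) (IHs vs)).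
Qed.

Lemma minwt_attained P : (exists v, P v) -> exists2 v, P v & minwt P = hwt v.
Proof.
case=> v0 Pv0; case: (arg_minnP (@hwt F n) Pv0) => v Pv vmin; exists v => //.
apply/eqP; rewrite eqn_leq minwt_le //=.
apply: (big_ind (fun m => hwt v <= m)%N) => [|x y vx vy | w Pw];
  by rewrite ?hwt_le ?leq_min ?vx ?vy ?vmin.
Qed.

Lemma subsets_avoid_zero_setsP P tau : (exists v, P v) ->
  (forall J, #|J| = tau -> forall v, P v -> ~~ (J \subset zero_set v)) <->
  (n - minwt P < tau)%N.
Proof.
move=> exP; split=> [avoid | lt_tau J cardJ v Pv].
  rewrite ltnNge; apply/negP => le_tau; have [v Pv vmin] := minwt_attained exP.
  have [J sJ cardJ] : exists2 J : {set 'I_n}, J \subset zero_set v & #|J| = tau.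
    by apply: exists_subset_card; rewrite card_zero_set -vmin.
  by have := avoid J cardJ v Pv; rewrite sJ.
apply/negP => /subset_leq_card; rewrite cardJ card_zero_set.
by have := minwt_le Pv; lia.
Qed.

Lemma mul_tr_disjoint_zero_sets z w J :
  ~: J \subset zero_set z -> J \subset zero_set w -> z *m w^T = 0.
Proof.
move=> /subsetP zJ /subsetP wJ; apply/matrixP => i k; rewrite !ord1 !mxE.
apply: big1 => j _; rewrite mxE; have [jJ | jJ] := boolP (j \in J).
  by move: (wJ j jJ); rewrite inE => /eqP ->; rewrite mulr0.
by move: (zJ j); rewrite !inE => /(_ jJ) /eqP ->; rewrite mul0r.
Qed.

End Weights.

Lemma mul_row_col_sub_lower (F : fieldType) m1 m2 n (A : 'M[F]_(m1, n))
    (B : 'M[F]_(m2, n)) (s : 'rV_m1) (r : 'rV_m2) :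
  row_free (col_mx A B) -> ((s *m A + r *m B)%R <= B)%MS = (s == 0).
Proof.
move=> freeAB; apply/idP/eqP => [/submxP [w sArB] | ->]; last by rewrite mul0mx add0r submxMl.
have : row_mx s (r - w) *m col_mx A B = 0 *m col_mx A B.
  by rewrite mul_row_col mul0mx mulmxBl addrA sArB subrr.
by move/(row_free_inj freeAB); rewrite -row_mx0 => /eq_row_mx [].
Qed.

Lemma dual_separates (F : fieldType) m n (M : 'M[F]_(m, n)) (x : 'rV_n) :
  ~~ (x <= M)%MS -> exists2 w : 'rV_n, M *m w^T == 0 & x *m w^T != 0.
Proof.
rewrite submxE => /rV0Pn [j xMj]; exists (col j (cokermx M))^T; rewrite trmxK colE mulmxA.
  by rewrite mulmx_coker mul0mx.
by rewrite -colE; apply: contraNneq xMj => /matrixP /(_ 0 0); rewrite mxE => ->; rewrite mxE.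
Qed.

Section WithExtension.
Variables (F : finFieldType) (n e : nat) (J : {set 'I_n}).

Lemma mem_with_ext_lshift j : (lshift e j \in with_ext e J) = (j \in J).
Proof.
rewrite /with_ext in_setU (mem_imset _ _ (@lshift_inj n e)).
by case: (j \in J) => //=; apply/imsetP => -[i _ /eqP]; rewrite eq_lrshift.
Qed.

Lemma mem_with_ext_rshift i : rshift n i \in with_ext e J.
Proof. by rewrite in_setU; apply/orP; right; apply/imsetP; exists i. Qed.

Lemma supp_on_with_ext (z : {ffun 'I_(n + e) -> F}) :
  (forall j, j \notin J -> z (lshift e j) = 0) -> supp_on (with_ext e J) z.
Proof.
move=> zJ; apply/supp_onP => i; rewrite -(splitK i); case: (split i) => j /=.
  by rewrite mem_with_ext_lshift; exact: zJ.
by rewrite mem_with_ext_rshift.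
Qed.

Lemma supp_on_compl_with_ext (z : {ffun 'I_(n + e) -> F}) :
  (forall j, j \in J -> z (lshift e j) = 0) -> (forall i, z (rshift n i) = 0) ->
  supp_on (~: with_ext e J) z.
Proof.
move=> zJ zE; apply/supp_onP => i; rewrite -(splitK i) inE negbK.
by case: (split i) => j /=; rewrite ?mem_with_ext_lshift; [exact: zJ | move=> _; exact: zE].
Qed.

End WithExtension.

Section ECSS.
Variables (F : finFieldType) (n k f1 e : nat).
Variables (G01 : 'M[F]_(k, n)) (G1 : 'M[F]_(f1, n)) (GE : 'M[F]_(e, n)).

Local Notation conf := (ecss_conf G01 G1 GE).
Local Notation enc := (ecss_enc G01 G1 GE).
Local Notation F0 := (col_mx G01 G1).
Local Notation code_word c := ((c%R <= F0)%MS && ~~ (c%R <= G1)%MS).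
Local Notation dual_word w := (in_dual (col_mx G1 GE) w && ~~ in_dual (col_mx F0 GE) w).

Lemma ecss_conf_lshift s r1 r2 j :
  conf s r1 r2 (lshift e j) = (s *m G01 + r1 *m G1 + r2 *m GE) 0 j.
Proof. by rewrite ffunE (unsplitK (inl _ j)). Qed.

Lemma ecss_conf_rshift s r1 r2 i : conf s r1 r2 (rshift n i) = r2 0 i.
Proof. by rewrite ffunE (unsplitK (inr _ i)). Qed.

Lemma ecss_confB s r1 r2 t u1 u2 :
  conf s r1 r2 - conf t u1 u2 = conf (s - t) (r1 - u1) (r2 - u2).
Proof.
apply/ffunP => i; rewrite !ffunE; case: (split i) => j; last by rewrite !mxE.
have entryB (X Y : 'rV[F]_n) : X 0 j - Y 0 j = (X - Y) 0 j by rewrite !mxE.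
by rewrite entryB !mulmxBl; congr (_ 0 j); rewrite opprD addrACA opprD (addrACA (s *m G01)).
Qed.

Lemma ecss_enc_translate s u1 u2 y : enc s (y + conf s u1 u2) = enc 0 y.
Proof.
rewrite /ecss_enc; congr (_ * _).
rewrite [RHS](reindex_inj (addIr (- u1))); apply: eq_bigr => r1 _.
rewrite [RHS](reindex_inj (addIr (- u2))); apply: eq_bigr => r2 _.
have -> : conf 0 (r1 - u1) (r2 - u2) = conf s r1 r2 - conf s u1 u2.
  by rewrite ecss_confB subrr.
by rewrite [in RHS]eq_sym subr_eq eq_sym.
Qed.

Lemma ecss_enc_ge0 s y : 0 <= enc s y.
Proof.
rewrite mulr_ge0 ?invr_ge0 ?sqrtC_ge0 ?ler0n //.
by apply: sumr_ge0 => r1 _; apply: sumr_ge0 => r2 _; apply: ler0n.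
Qed.

Lemma ecss_enc_support s y : enc s y != 0 -> exists r1 r2, y = conf s r1 r2.
Proof.
have [/existsP [r1 /existsP [r2 /eqP ->]] _ | none] :=
  boolP [exists r1, exists r2, y == conf s r1 r2]; first by exists r1, r2.
rewrite /ecss_enc big1 ?mulr0 ?eqxx // => r1 _; apply: big1 => r2 _.
case: eqP => // y_conf; case/negP: none.
by apply/existsP; exists r1; apply/existsP; exists r2; apply/eqP.
Qed.

Lemma ecss_not_authorized_of_code_word (J : {set 'I_n}) c :
  code_word c -> J \subset zero_set c -> ~ authorized enc (with_ext e J).
Proof.
case/andP=> /submxP [x ->{c}]; rewrite -[x]hsubmxK mul_row_col.
set s := lsubmx x; set r1 := rsubmx x => notG1 /subsetP cJ.
have s_neq0 : s != 0 by apply: contraNneq notG1 => ->; rewrite mul0mx add0r submxMl.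
have conf_off : supp_on (~: with_ext e J) (conf s r1 0).
  apply: supp_on_compl_with_ext => [j jJ | i]; last by rewrite ecss_conf_rshift mxE.
  by rewrite ecss_conf_lshift mul0mx addr0; move: (cJ j jJ); rewrite inE => /eqP.
apply: (not_authorized_of_translate (c := Sub _ conf_off) s_neq0) => y.
exact: ecss_enc_translate.
Qed.

Lemma ecss_not_authorized_of_dual_word (J : {set 'I_n}) w :
  dual_word w -> J \subset zero_set w -> ~ authorized enc (with_ext e J).
Proof.
rewrite /in_dual !mul_col_mx !col_mx_eq0 => /andP [/andP [/eqP G1w /eqP GEw]].
rewrite G1w GEw !eqxx !andbT => G01w wJ.
have decoh t t' (a a' : confA F (with_ext e J)) :
    (t - t') *m (G01 *m w^T) != 0 -> reduce_outer enc t t' a a' = 0.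
  move=> tt'; apply: big1 => b _.
  have [-> | /ecss_enc_support [r1 [r2 ab]]] := eqVneq (enc t (val a + val b)) 0.
    by rewrite mul0r.
  have [-> | /ecss_enc_support [u1 [u2 a'b]]] := eqVneq (enc t' (val a' + val b)) 0.
    by rewrite conjC0 mulr0.
  have diff : conf (t - t') (r1 - u1) (r2 - u2) = val a - val a'.
    by rewrite -ecss_confB -ab -a'b opprD addrACA subrr addr0.
  set z := (t - t') *m G01 + (r1 - u1) *m G1 + (r2 - u2) *m GE.
  have zJ : ~: J \subset zero_set z.
    apply/subsetP => j; rewrite !inE => jJ; move/ffunP/(_ (lshift e j)): diff.
    rewrite ecss_conf_lshift !ffunE => ->.
    move: (valP a) (valP a') => /supp_onP aJ /supp_onP a'J.
    by rewrite aJ ?a'J ?subrr // mem_with_ext_lshift.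
  have := mul_tr_disjoint_zero_sets zJ wJ.
  rewrite !mulmxDl -!mulmxA G1w GEw !mulmx0 !addr0 => /eqP.
  by rewrite -mulmxDl (negbTE tt').
have /cV0Pn [i0 Gi0] := G01w; pose s : 'rV[F]_k := delta_mx 0 i0.
have s_sep : s *m (G01 *m w^T) != 0 by rewrite -rowE; apply/rV0Pn; exists 0; rewrite mxE.
apply: (@not_authorized_of_decoherent _ _ _ _ _ s 0).
- by apply: contraNneq s_sep => ->; rewrite mul0mx.
- by move=> a a'; apply: decoh; rewrite subr0.
- by move=> a a'; apply: decoh; rewrite sub0r mulNmx oppr_eq0.
Qed.

Hypothesis F0_free : row_free F0.

Lemma ecss_conf_inj s : injective (fun r : 'rV[F]_f1 * 'rV[F]_e => conf s r.1 r.2).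
Proof.
move=> [r1 r2] [u1 u2] /= /eqP; rewrite -subr_eq0 ecss_confB subrr => /eqP conf0.
have r2E : r2 - u2 = 0.
  by apply/rowP => i; move/ffunP/(_ (rshift n i)): conf0; rewrite ecss_conf_rshift !ffunE !mxE.
have : row_mx 0 (r1 - u1) *m F0 = 0 *m F0.
  rewrite mul_row_col !mul0mx add0r; apply/rowP => j; move/ffunP/(_ (lshift e j)): conf0.
  by rewrite ecss_conf_lshift r2E !mul0mx add0r addr0 ffunE => ->; rewrite mxE.
move/(row_free_inj F0_free); rewrite -row_mx0 => /eq_row_mx [_ /eqP].
by move/eqP: r2E; rewrite !subr_eq0 => /eqP -> /eqP ->.
Qed.

Lemma ecss_enc_normed s : \sum_y enc s y * (enc s y)^* = 1.
Proof.
pose c : algC := (sqrtC (#|F| ^ (f1 + e))%N%:R)^-1.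
pose ind y : algC := \sum_(r : 'rV[F]_f1 * 'rV[F]_e) (y == conf s r.1 r.2)%:R.
have enc_ind y : enc s y = c * ind y by rewrite /ecss_enc pair_big.
have ind2 : \sum_y ind y * ind y = (#|F| ^ (f1 + e))%N%:R.
  transitivity (\sum_(r : 'rV[F]_f1 * 'rV[F]_e) \sum_(r' : 'rV[F]_f1 * 'rV[F]_e)
                  (r' == r)%:R * 1 : algC).
    rewrite /ind; under eq_bigr => y _ do rewrite mulr_suml; rewrite exchange_big.
    apply: eq_bigr => r _; under eq_bigr => y _ do rewrite mulr_sumr; rewrite exchange_big.
    apply: eq_bigr => r' _; rewrite (sum_indicator (conf s r.1 r.2)).
    by rewrite mulr1 eq_sym (inj_eq (@ecss_conf_inj s)).
  under eq_bigr => r _ do rewrite (sum_indicator r (fun _ => 1)).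
  by rewrite sumr_const card_prod !card_mx !mul1n -expnD addnC.
have c2 : c ^+ 2 * (#|F| ^ (f1 + e))%N%:R = 1.
  have F_gt0 : (0 < #|F|)%N by apply/card_gt0P; exists 0.
  by rewrite exprVn sqrtCK mulVf // pnatr_eq0 -lt0n expn_gt0 F_gt0.
rewrite -[RHS]c2 -ind2 mulr_sumr; apply: eq_bigr => y _.
by rewrite conj_Creal ?ger0_real ?ecss_enc_ge0 // enc_ind mulrACA expr2.
Qed.

Lemma ecss_secret_determined (J : {set 'I_n}) :
  (forall c, code_word c -> ~~ (J \subset zero_set c)) ->
  forall s t (a : confA F (with_ext e J)) (b b' : confA F (~: with_ext e J)),
    enc s (val a + val b) != 0 -> enc t (val a + val b') != 0 -> s = t.
Proof.
move=> noF0 s t a b b' /ecss_enc_support [r1 [r2 ab]] /ecss_enc_support [u1 [u2 ab']].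
have diff : conf (s - t) (r1 - u1) (r2 - u2) = val b - val b'.
  by rewrite -ecss_confB -ab -ab' opprD addrACA subrr add0r.
have onA i : i \in with_ext e J -> (val b - val b') i = 0.
  move=> iA; move: (valP b) (valP b') => /supp_onP bA /supp_onP b'A.
  by rewrite !ffunE bA ?b'A ?oppr0 ?addr0 // in_setC negbK.
have r2E : r2 - u2 = 0.
  apply/rowP => i; move: (onA _ (mem_with_ext_rshift J i)).
  by rewrite -diff ecss_conf_rshift => ->; rewrite mxE.
apply/eqP; rewrite -subr_eq0; apply/negPn/negP => st.
set c := (s - t) *m G01 + (r1 - u1) *m G1.
have c_word : code_word c by rewrite /c -mul_row_col submxMl mul_row_col mul_row_col_sub_lower.
apply: (negP (noF0 c c_word)); apply/subsetP => j jJ; rewrite inE.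
have := onA (lshift e j); rewrite mem_with_ext_lshift jJ -diff ecss_conf_lshift r2E.
by rewrite mul0mx addr0 => /(_ isT) ->.
Qed.

Lemma ecss_coset_rep (J : {set 'I_n}) :
  (forall w, dual_word w -> ~~ (J \subset zero_set w)) ->
  forall s, exists d : confA F (with_ext e J), forall y, enc s (y + val d) = enc 0 y.
Proof.
move=> noDual s; pose mask : 'M[F]_n := diag_mx (\row_j (j \notin J)%:R).
have maskE (X : 'rV[F]_n) j : (X *m mask) 0 j = X 0 j * (j \notin J)%:R.
  by rewrite mul_mx_diag !mxE.
suff [r1 [r2 rep]] : exists r1 r2, forall j, j \notin J ->
    (s *m G01 + r1 *m G1 + r2 *m GE) 0 j = 0.
  have repA : supp_on (with_ext e J) (conf s r1 r2).
    by apply: supp_on_with_ext => j jJ; rewrite ecss_conf_lshift rep.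
  by exists (Sub _ repA) => y; exact: ecss_enc_translate.
(* Either s G01 agrees outside J with a word of F1 + E, or a dual word of
   F1 + E vanishing on J separates it from them. *)
have [/submxP [y xM] | notM] := boolP (s *m G01 *m mask <= col_mx G1 GE *m mask)%MS.
  exists (- lsubmx y), (- rsubmx y) => j jJ.
  move/rowP/(_ j): xM; rewrite mulmxA !maskE jJ !mulr1 -{1}(hsubmxK y) mul_row_col.
  by rewrite !mulNmx -addrA -opprD => xM; rewrite [LHS]mxE [X in _ + X]mxE xM subrr.
have [w' Mw' xw'] := dual_separates notM.
have wT : (w' *m mask)^T = mask *m w'^T by rewrite trmx_mul tr_diag_mx.
have w_dual : dual_word (w' *m mask).
  rewrite /in_dual wT mulmxA Mw' /=; apply: contra xw'.
  rewrite !mul_col_mx !col_mx_eq0 => /andP [/andP [/eqP G01w _] _].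
  by rewrite -!mulmxA G01w mulmx0.
suff : J \subset zero_set (w' *m mask) by rewrite (negbTE (noDual _ w_dual)).
by apply/subsetP => j jJ; rewrite inE maskE jJ mulr0.
Qed.

Lemma ecss_authorizedP (J : {set 'I_n}) :
  authorized enc (with_ext e J) <->
  (forall c, code_word c -> ~~ (J \subset zero_set c)) /\
  (forall w, dual_word w -> ~~ (J \subset zero_set w)).
Proof.
split=> [authJ | [noF0 noDual]].
  split=> [c c_word | w w_dual]; apply/negP => Jzero.
    exact: ecss_not_authorized_of_code_word c_word Jzero authJ.
  exact: ecss_not_authorized_of_dual_word w_dual Jzero authJ.
apply: (@authorized_of_translations _ _ _ _ _ 0).
- exact: ecss_secret_determined.
- exact: ecss_coset_rep.
- exact: ecss_enc_normed.
Qed.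

Hypothesis k_gt0 : (0 < k)%N.

Lemma ecss_code_word_exists : exists c : 'rV[F]_n, code_word c.
Proof.
pose s : 'rV[F]_k := delta_mx 0 (Ordinal k_gt0).
exists (s *m G01 + 0 *m G1); rewrite -mul_row_col submxMl mul_row_col.
rewrite mul_row_col_sub_lower //; apply/rV0Pn; exists (Ordinal k_gt0).
by rewrite mxE !eqxx oner_neq0.
Qed.

(* Otherwise F0 + E may equal F1 + E, and the second weight in tau_e is the
   junk default n of [minwt]. *)
Hypothesis F0_E_disjoint : (F0 :&: GE == (0 : 'M[F]_n))%MS.

Lemma ecss_dual_word_exists : exists w : 'rV[F]_n, dual_word w.
Proof.
have [c /andP [cF0 cG1]] := ecss_code_word_exists.
have c_notG1E : ~~ (c <= col_mx G1 GE)%MS.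
  apply: contra cG1; rewrite -addsmxE => /sub_addsmxP [[y1 y2] /= c_def].
  have G1F0 : (G1 <= F0)%MS by rewrite -addsmxE addsmxSr.
  have y2GE0 : y2 *m GE = 0.
    apply/eqP; rewrite -submx0; apply: submx_trans (proj1 (andP F0_E_disjoint)).
    rewrite sub_capmx submxMl andbT.
    have -> : y2 *m GE = c - y1 *m G1 by rewrite c_def addrC addKr.
    by rewrite addmx_sub // -mulNmx (submx_trans (submxMl _ _) G1F0).
  by rewrite c_def y2GE0 addr0 submxMl.
have [w Mw cw] := dual_separates c_notG1E; exists w; rewrite {1}/in_dual Mw /=.
apply: contra cw; rewrite /in_dual mul_col_mx col_mx_eq0 => /andP [/eqP F0w _].
by case/submxP: cF0 => x ->; rewrite -mulmxA F0w mulmx0.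
Qed.

End ECSS.
Theorem corollary1 (F : finFieldType) (n k f1 e : nat)
  (G01 : 'M[F]_(k, n)) (G1 : 'M[F]_(f1, n)) (GE : 'M[F]_(e, n)) (tau : nat) :
  (0 < k)%N ->
  row_free (col_mx G01 G1) ->
  (col_mx G01 G1 :&: GE == (0 : 'M[F]_n))%MS ->
  (forall J : {set 'I_n}, #|J| = tau ->
      authorized (ecss_enc G01 G1 GE) (with_ext e J))
  <-> (tau_e G01 G1 GE <= tau)%N.
Proof.
move=> k_gt0 F0_free F0_E; have authP J := ecss_authorizedP GE F0_free J.
have avoid_code := subsets_avoid_zero_setsP tau (ecss_code_word_exists F0_free k_gt0).
have avoid_dual := subsets_avoid_zero_setsP tau (ecss_dual_word_exists F0_free k_gt0 F0_E).
rewrite /tau_e /wt_diff /wt_dual_diff; split=> [auth_tau | le_tau J cardJ].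
  have /avoid_code lt_code := fun J cardJ => ((authP J).1 (auth_tau J cardJ)).1.
  have /avoid_dual lt_dual := fun J cardJ => ((authP J).1 (auth_tau J cardJ)).2.
  lia.
by apply/authP; split; [apply: avoid_code.2 | apply: avoid_dual.2]; lia.
Qed.
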